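(* Let $\rho\in(0,1)$ and let $\Lambda\ge2$ be an integer. The following are equivalent: (a) there exist real numbers $r_1,\dots,r_{\Lambda-1}$ with $r_{s+1}=\dfrac{[1+(\rho^{-1}+1)r_1]r_s+r_1}{1-\rho^{-1}r_1r_s}$ for $1\le s\le\Lambda-2$ and $\rho^2\le r_1\le\cdots\le r_{\Lambda-1}\le\rho$; (b) the numbers $r_k=\rho\dfrac{X^k-1}{1-\rho X^k}$ with $X=\dfrac{1+\rho}{1+\rho^2}$ satisfy $\rho^2\le r_k\le\rho$ for $1\le k\le\Lambda-1$; (c) the numbers $r_k=\rho\dfrac{X^k-1}{1-\rho X^k}$ with $X=\big(\tfrac{2}{1+\rho}\big)^{1/(\Lambda-1)}$ satisfy $\rho^2\le r_k\le\rho$ for $1\le k\le\Lambda-1$; (d) $(1+\rho)^\Lambda\le2(1+\rho^2)^{\Lambda-1}$; (e) $\rho\le\rho^\star_\Lambda$, where for $\Lambda\ge3$, $\rho^\star_\Lambda$ is the unique solution in $(0,1)$ of $(1+\rho)^\Lambda=2(1+\rho^2)^{\Lambda-1}$ (in particular this solution exists and is unique), and $\rho^\star_2=1$. *)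

From Stdlib Require Export Reals.
Open Scope R_scope.

Definition rk (rho X : R) (k : nat) : R := rho * (X ^ k - 1) / (1 - rho * X ^ k).

Definition rec_step (rho r1 rs : R) : R :=
  ((1 + (/ rho + 1) * r1) * rs + r1) / (1 - / rho * r1 * rs).

(* Condition (a): there exist r_1,...,r_{Λ-1} (indexed by nat, only indices
   1..Λ-1 matter) satisfying the recursion and ρ^2 ≤ r_1 ≤ ... ≤ r_{Λ-1} ≤ ρ. *)
Definition cond_a (rho : R) (L : nat) : Prop :=
  exists r : nat -> R,
    (forall s : nat, (1 <= s <= L - 2)%nat -> r (S s) = rec_step rho (r 1%nat) (r s)) /\
    rho ^ 2 <= r 1%nat /\
    (forall s : nat, (1 <= s <= L - 2)%nat -> r s <= r (S s)) /\
    r (L - 1)%nat <= rho.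

Definition bounds_rk (rho X : R) (L : nat) : Prop :=
  forall k : nat, (1 <= k <= L - 1)%nat -> rho ^ 2 <= rk rho X k <= rho.

Definition Xb (rho : R) : R := (1 + rho) / (1 + rho ^ 2).
Definition Xc (rho : R) (L : nat) : R := Rpower (2 / (1 + rho)) (/ INR (L - 1)).

Definition star_eq (L : nat) (s : R) : Prop := (1 + s) ^ L = 2 * (1 + s ^ 2) ^ (L - 1).

Definition is_rho_star (L : nat) (s : R) : Prop :=
  (L = 2%nat /\ s = 1) \/ ((3 <= L)%nat /\ 0 < s < 1 /\ star_eq L s).

(* Write n = Λ - 1 and consider the Möbius map  t ↦ g(t) = ρ (t - 1) / (1 - ρ t),
   so that r_k = g(X^k).  Three algebraic facts about g drive (a)–(d):
   - g maps the window [X_b, X_max] (X_b = (1+ρ)/(1+ρ^2), X_max = 2/(1+ρ))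
     exactly onto [ρ^2, ρ], and is nondecreasing there;
   - the recursion of (a) is multiplicative: rec_step (g X) (g T) = g (X T);
   - g is invertible, so any solution of (a) is r_s = g(X^s) for X = g^{-1}(r_1).
   Hence each of (a), (b), (c) says "X^k lies in the window for 1 ≤ k ≤ n" for a
   suitable X ≥ X_b, i.e. X_b ≤ X and X^n ≤ X_max, and all three reduce to
   X_b^n ≤ X_max, which is (d) after clearing denominators.
   For (e), (d) reads q(ρ) ≤ 2 with q(s) = (1+s) ((1+s)/(1+s^2))^n.  For n ≥ 2 the
   derivative of q has the sign of a quadratic with a single root in (0,1), so q
   rises then falls on [0,1]; since q(0) = 1 and q(1) = 2, the level 2 is crossed
   exactly once in (0,1), at ρ*, and q(ρ) ≤ 2 iff ρ ≤ ρ*.  For n = 1, (d) always holds. *)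

From Stdlib Require Import Reals Lra Lia Psatz.
From Coquelicot Require Import Coquelicot.
Open Scope R_scope.

Lemma steps_le (r : nat -> R) (n : nat) :
  (forall s : nat, (1 <= s <= n - 1)%nat -> r s <= r (S s)) ->
  forall i j : nat, (1 <= i <= j)%nat -> (j <= n)%nat -> r i <= r j.
Proof.
  intros Hstep i j Hij Hjn. induction j as [|j IH]; [lia|].
  destruct (Nat.eq_dec i (S j)) as [->|Hne]; [lra|].
  apply Rle_trans with (r j); [apply IH; lia|apply Hstep; lia].
Qed.

Section MobiusMap.

Variable rho : R.
Hypothesis Hrho : 0 < rho < 1.

Definition rmap (t : R) : R := rho * (t - 1) / (1 - rho * t).
Definition rinv (r : R) : R := (r + rho) / (rho * (1 + r)).
Definition Xmax : R := 2 / (1 + rho).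

Lemma rk_rmap (X : R) (k : nat) : rk rho X k = rmap (X ^ k).
Proof. reflexivity. Qed.

Lemma rmap_rinv (r : R) : 0 <= r -> rmap (rinv r) = r.
Proof. intros. unfold rmap, rinv. field. repeat split; lra. Qed.

(* The window lies above 1, so powers of any X in it increase. *)
Lemma Xb_gt1 : 1 < Xb rho.
Proof. unfold Xb. apply (Rmult_lt_reg_r (1 + rho ^ 2)); [nra|]. field_simplify; nra. Qed.

Lemma denom_pos (t : R) : t <= Xmax -> 0 < 1 - rho * t.
Proof.
  intros Ht. assert (rho * Xmax < 1).
  { unfold Xmax. apply (Rmult_lt_reg_r (1 + rho)); [lra|]. field_simplify; lra. }
  nra.
Qed.

Lemma rmap_le (t1 t2 : R) : t1 <= t2 -> 0 < 1 - rho * t2 -> rmap t1 <= rmap t2.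
Proof.
  intros H12 Hd. assert (0 < 1 - rho * t1) by nra.
  assert (E : forall t, 1 - rho * t <> 0 -> rmap t = -1 + (1 - rho) / (1 - rho * t))
    by (intros; unfold rmap; field; auto).
  rewrite !E by lra. apply Rplus_le_compat_l. unfold Rdiv.
  apply Rmult_le_compat_l; [lra|]. apply Rinv_le_contravar; nra.
Qed.

Lemma rmap_window (t : R) : rho ^ 2 <= rmap t <= rho <-> Xb rho <= t <= Xmax.
Proof.
  unfold Xb, Xmax. assert (0 < 1 + rho ^ 2) by nra.
  assert (E1 : (1 + rho) / (1 + rho ^ 2) * (1 + rho ^ 2) = 1 + rho) by (field; lra).
  assert (E2 : 2 / (1 + rho) * (1 + rho) = 2) by (field; lra).
  destruct (Rlt_or_le 0 (1 - rho * t)) as [Hd|Hd].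
  - assert (E3 : rmap t * (1 - rho * t) = rho * (t - 1)) by (unfold rmap; field; lra).
    set (v := rmap t) in *.
    split; intros [Hlo Hhi]; split.
    + assert (rho ^ 2 * (1 - rho * t) <= v * (1 - rho * t))
        by (apply Rmult_le_compat_r; lra).
      assert (rho * (1 - rho * t) <= t - 1) by nra. nra.
    + assert (v * (1 - rho * t) <= rho * (1 - rho * t))
        by (apply Rmult_le_compat_r; lra). nra.
    + apply (Rmult_le_reg_r (1 - rho * t)); [lra|]. rewrite E3.
      assert (1 + rho <= t * (1 + rho ^ 2)) by nra. nra.
    + apply (Rmult_le_reg_r (1 - rho * t)); [lra|]. rewrite E3. nra.
  - assert (Hneg : rmap t <= 0).
    { unfold rmap. destruct (Req_dec (1 - rho * t) 0) as [H0|H0].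
      + rewrite H0. unfold Rdiv. rewrite Rinv_0. lra.
      + assert (/ (1 - rho * t) < 0) by (apply Rinv_lt_0_compat; lra).
        unfold Rdiv. nra. }
    split; intros [Hlo Hhi]; nra.
Qed.

Lemma rec_denom_pos (r1 rs : R) :
  rho ^ 2 <= r1 <= rho -> rho ^ 2 <= rs <= rho -> 0 < 1 - / rho * r1 * rs.
Proof.
  intros H1 Hs. assert (r1 * rs <= rho * rho) by nra.
  replace (/ rho * r1 * rs) with ((r1 * rs) / rho) by (field; lra).
  assert (r1 * rs / rho <= rho); [|lra].
  apply (Rmult_le_reg_r rho); [lra|]. field_simplify; nra.
Qed.

Lemma rec_step_rmap (X T : R) :
  1 - rho * X <> 0 -> 1 - rho * T <> 0 -> 1 - / rho * rmap X * rmap T <> 0 ->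
  rec_step rho (rmap X) (rmap T) = rmap (X * T).
Proof.
  intros HX HT Hstep.
  assert (Hden : 1 - / rho * rmap X * rmap T
                 = (1 - rho) * (1 - rho * (X * T)) / ((1 - rho * X) * (1 - rho * T)))
    by (unfold rmap; field; repeat split; auto; lra).
  assert (HXT : 1 - rho * (X * T) <> 0).
  { intros H0. rewrite Hden, H0 in Hstep. apply Hstep. unfold Rdiv. ring. }
  unfold rec_step. rewrite Hden. unfold rmap. field. repeat split; auto; lra.
Qed.

Lemma bounds_rk_iff (X : R) (n : nat) :
  (1 <= n)%nat -> bounds_rk rho X (S n) <-> Xb rho <= X /\ X ^ n <= Xmax.
Proof.
  intros Hn. unfold bounds_rk. replace (S n - 1)%nat with n by lia.
  pose proof Xb_gt1 as Hxb.
  split.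
  - intros H. split.
    + rewrite <- (pow_1 X). apply (rmap_window (X ^ 1)), H. lia.
    + apply (rmap_window (X ^ n)), H. lia.
  - intros [HX HXn] k Hk. rewrite rk_rmap. apply rmap_window. split.
    + apply Rle_trans with X; [lra|]. rewrite <- (pow_1 X) at 1. apply Rle_pow; lra || lia.
    + apply Rle_trans with (X ^ n); [apply Rle_pow; lra || lia|lra].
Qed.

Lemma rec_closed_form (r : nat -> R) (n : nat) :
  (forall s : nat, (1 <= s <= n - 1)%nat -> r (S s) = rec_step rho (r 1%nat) (r s)) ->
  (forall s : nat, (1 <= s <= n)%nat -> rho ^ 2 <= r s <= rho) ->
  forall s : nat, (1 <= s <= n)%nat -> r s = rmap (rinv (r 1%nat) ^ s).
Proof.
  intros Hrec Hb s Hs. assert (Hr1 : rho ^ 2 <= r 1%nat <= rho) by (apply Hb; lia).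
  set (X := rinv (r 1%nat)).
  assert (HX : rmap X = r 1%nat) by (apply rmap_rinv; nra).
  revert Hs. induction s as [|s IH]; intros Hs; [lia|].
  destruct (Nat.eq_dec s 0) as [->|Hs0]; [rewrite pow_1; auto|].
  assert (IHs : r s = rmap (X ^ s)) by (apply IH; lia).
  assert (WX : Xb rho <= X <= Xmax) by (apply rmap_window; rewrite HX; apply Hb; lia).
  assert (WXs : Xb rho <= X ^ s <= Xmax) by (apply rmap_window; rewrite <- IHs; apply Hb; lia).
  rewrite Hrec, IHs, <- HX by lia. change (X ^ S s) with (X * X ^ s).
  apply rec_step_rmap; try (apply Rgt_not_eq, denom_pos; lra).
  rewrite HX, <- IHs. apply Rgt_not_eq, rec_denom_pos; apply Hb; lia.
Qed.

Lemma cond_a_iff (n : nat) : (1 <= n)%nat -> cond_a rho (S n) <-> Xb rho ^ n <= Xmax.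
Proof.
  intros Hn. pose proof Xb_gt1 as Hxb. unfold cond_a.
  replace (S n - 1)%nat with n by lia. replace (S n - 2)%nat with (n - 1)%nat by lia.
  split.
  - intros (r & Hrec & Hr1 & Hmono & Hlast).
    assert (Hb : forall s, (1 <= s <= n)%nat -> rho ^ 2 <= r s <= rho).
    { intros s Hs. split.
      - apply Rle_trans with (r 1%nat); [lra|apply (steps_le r n); lia || auto].
      - apply Rle_trans with (r n); [apply (steps_le r n); lia || auto|lra]. }
    assert (HbX : bounds_rk rho (rinv (r 1%nat)) (S n)).
    { unfold bounds_rk. replace (S n - 1)%nat with n by lia. intros k Hk.
      rewrite rk_rmap, <- (rec_closed_form r n Hrec Hb k Hk). apply Hb, Hk. }
    set (X := rinv (r 1%nat)) in HbX.
    apply bounds_rk_iff in HbX as [HX HXn]; [|lia].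
    apply Rle_trans with (X ^ n); [apply pow_incr; lra|exact HXn].
  - intros Hpow. exists (rk rho (Xb rho)).
    assert (Hb : bounds_rk rho (Xb rho) (S n)) by (apply bounds_rk_iff; lra || lia).
    unfold bounds_rk in Hb. replace (S n - 1)%nat with n in Hb by lia.
    assert (Hk : forall k, (1 <= k <= n)%nat -> Xb rho ^ k <= Xmax)
      by (intros k Hk; apply rmap_window, Hb, Hk).
    split; [|split; [|split]].
    + intros s Hs. rewrite !rk_rmap, pow_1. change (Xb rho ^ S s) with (Xb rho * Xb rho ^ s).
      symmetry. apply rec_step_rmap.
      * apply Rgt_not_eq, denom_pos. rewrite <- (pow_1 (Xb rho)). apply Hk. lia.
      * apply Rgt_not_eq, denom_pos, Hk. lia.
      * rewrite <- (pow_1 (Xb rho)) at 1. rewrite <- !rk_rmap.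
        apply Rgt_not_eq, rec_denom_pos; apply Hb; lia.
    + apply Hb. lia.
    + intros s Hs. rewrite !rk_rmap. apply rmap_le.
      * apply Rle_pow; lra || lia.
      * apply denom_pos, Hk. lia.
    + apply Hb. lia.
Qed.

Lemma Xb_pow_iff (n : nat) :
  Xb rho ^ n <= Xmax <-> (1 + rho) ^ (S n) <= 2 * (1 + rho ^ 2) ^ n.
Proof.
  assert (HP : 0 < (1 + rho ^ 2) ^ n) by (apply pow_lt; nra).
  assert (E : Xb rho ^ n * (1 + rho ^ 2) ^ n = (1 + rho) ^ n).
  { rewrite <- Rpow_mult_distr. f_equal. unfold Xb. field. nra. }
  assert (E2 : 2 * (1 + rho ^ 2) ^ n = (1 + rho) * (Xmax * (1 + rho ^ 2) ^ n))
    by (unfold Xmax; field; lra).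
  change ((1 + rho) ^ (S n)) with ((1 + rho) * (1 + rho) ^ n).
  rewrite E2, <- E. split; intros H.
  - apply Rmult_le_compat_l; [lra|]. apply Rmult_le_compat_r; lra.
  - apply Rmult_le_reg_l in H; [|lra]. apply Rmult_le_reg_r in H; lra.
Qed.

Lemma Xc_pow (n : nat) : (1 <= n)%nat -> Xc rho (S n) ^ n = Xmax.
Proof.
  intros Hn. unfold Xc. replace (S n - 1)%nat with n by lia.
  assert (0 < Xmax) by (unfold Xmax; apply Rdiv_lt_0_compat; lra).
  rewrite <- Rpower_pow by (unfold Rpower; apply exp_pos).
  rewrite Rpower_mult, Rinv_l by (apply not_0_INR; lia). apply Rpower_1. auto.
Qed.

Lemma Xb_le_Xc_iff (n : nat) :
  (1 <= n)%nat -> Xb rho <= Xc rho (S n) <-> Xb rho ^ n <= Xmax.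
Proof.
  intros Hn. pose proof Xb_gt1 as Hxb. rewrite <- (Xc_pow n Hn). split; intros H.
  - apply pow_incr. lra.
  - assert (Hroot : forall x, 0 < x -> Rpower (x ^ n) (/ INR n) = x).
    { intros x Hx. rewrite <- Rpower_pow, Rpower_mult, Rinv_r by (lra || apply not_0_INR; lia).
      apply Rpower_1. auto. }
    rewrite <- (Hroot (Xb rho)), <- (Hroot (Xc rho (S n))) by (lra || (unfold Xc, Rpower; apply exp_pos)).
    apply Rle_Rpower_l; [left; apply Rinv_0_lt_compat, lt_0_INR; lia|].
    split; [apply pow_lt; lra|exact H].
Qed.

End MobiusMap.

Lemma continuity_of_derive (f df : R -> R) :
  (forall x, is_derive f x (df x)) -> continuity f.
Proof.
  intros Hd. apply derivable_continuous. intros x.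
  exists (df x). apply is_derive_Reals, Hd.
Qed.

Lemma strict_incr_of_derive (f df : R -> R) (a b : R) :
  (forall x, is_derive f x (df x)) -> (forall t, a < t < b -> 0 < df t) ->
  forall x y, a <= x -> x < y -> y <= b -> f x < f y.
Proof.
  intros Hd Hp x y Hx Hxy Hy.
  assert (H : forall x, derivable_pt_lim f x (df x)) by (intros; apply is_derive_Reals, Hd).
  pose (pr := (fun x => exist (fun l => derivable_pt_abs f x l) (df x) (H x)) : derivable f).
  apply (derive_increasing_interv a b f pr); try lra. intros t Ht. apply Hp, Ht.
Qed.

Lemma unimodal_crossing (f : R -> R) (a m b y : R) :
  continuity f -> a < m < b ->
  (forall x x', a <= x -> x < x' -> x' <= m -> f x < f x') ->
  (forall x x', m <= x -> x < x' -> x' <= b -> f x' < f x) ->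
  f a < y -> f b = y ->
  exists z, a < z < b /\ f z = y /\
    (forall w, a < w < b -> (f w <= y <-> w <= z)) /\
    (forall w, a < w < b -> f w = y -> w = z).
Proof.
  intros Hc Ham Hinc Hdec Ha Hb.
  assert (Hm : y < f m) by (rewrite <- Hb; apply Hdec; lra).
  destruct (IVT (fun s => f s - y) a m) as [z [Hz Hfz]];
    [apply continuity_minus; [auto|apply continuity_const; intros ? ?; reflexivity]|lra|lra|lra|].
  assert (Hza : z <> a) by (intros ->; lra).
  assert (Hzm : z <> m) by (intros ->; lra).
  assert (Above : forall w, z < w < b -> y < f w).
  { intros w Hw. destruct (Rle_or_lt w m).
    - replace y with (f z) by lra. apply Hinc; lra.
    - rewrite <- Hb. apply Hdec; lra. }
  assert (Below : forall w, a < w < z -> f w < y)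
    by (intros w Hw; replace y with (f z) by lra; apply Hinc; lra).
  exists z. split; [lra|]. split; [lra|]. split.
  - intros w Hw. split; intros H.
    + destruct (Rle_or_lt w z); auto. specialize (Above w). lra.
    + destruct (Rle_lt_or_eq_dec w z H) as [Hlt | ->]; [specialize (Below w)|]; lra.
  - intros w Hw Hq. destruct (Rtotal_order w z) as [H|[H|H]]; auto;
      [specialize (Below w)|specialize (Above w)]; lra.
Qed.

(* The quadratic governing the sign of q'.  For N > 1 it has one root s0 in (0,1),
   being positive on [0, s0) and negative after. *)
Definition psi (N s : R) : R := N + 1 - 2 * N * s - (N - 1) * s ^ 2.

Lemma psi_sign (N : R) : 1 < N ->
  exists s0, 0 < s0 < 1 /\ forall s, 0 <= s -> (s < s0 -> 0 < psi N s) /\ (s0 < s -> psi N s < 0).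
Proof.
  intros HN.
  assert (Hdiff : forall s t, psi N s - psi N t = (t - s) * (2 * N + (N - 1) * (s + t)))
    by (intros; unfold psi; ring).
  destruct (IVT (fun s => - psi N s) 0 1) as [s0 [Hs0 Hps]];
    [unfold psi; reg|lra|unfold psi; lra|unfold psi; lra|].
  assert (Hs00 : s0 <> 0) by (intros ->; unfold psi in Hps; lra).
  assert (Hs01 : s0 <> 1) by (intros ->; unfold psi in Hps; lra).
  exists s0. split; [lra|]. intros s Hs. specialize (Hdiff s s0).
  assert (0 < 2 * N + (N - 1) * (s + s0)) by nra.
  split; intros; nra.
Qed.

Definition q (n : nat) (s : R) : R := (1 + s) * ((1 + s) / (1 + s ^ 2)) ^ n.

Lemma q_mul (n : nat) (s : R) : (1 + s) ^ (S n) = q n s * (1 + s ^ 2) ^ n.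
Proof.
  unfold q. rewrite Rmult_assoc, <- Rpow_mult_distr.
  replace ((1 + s) / (1 + s ^ 2) * (1 + s ^ 2)) with (1 + s) by (field; nra). reflexivity.
Qed.

Lemma q_le_iff (n : nat) (s : R) : (1 + s) ^ (S n) <= 2 * (1 + s ^ 2) ^ n <-> q n s <= 2.
Proof.
  rewrite q_mul. assert (Hpos : 0 < (1 + s ^ 2) ^ n) by (apply pow_lt; nra).
  split; intros H.
  - apply (Rmult_le_reg_r ((1 + s ^ 2) ^ n)); lra.
  - apply Rmult_le_compat_r; lra.
Qed.

Lemma q_eq_iff (n : nat) (s : R) : star_eq (S n) s <-> q n s = 2.
Proof.
  unfold star_eq. replace (S n - 1)%nat with n by lia. rewrite q_mul.
  assert (Hpos : 0 < (1 + s ^ 2) ^ n) by (apply pow_lt; nra).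
  split; intros H.
  - apply (Rmult_eq_reg_r ((1 + s ^ 2) ^ n)); lra.
  - rewrite H. reflexivity.
Qed.

Lemma q_derive (m : nat) (x : R) :
  is_derive (q (S m)) x
    (((1 + x) / (1 + x ^ 2)) ^ m * (1 + x) / (1 + x ^ 2) ^ 2 * psi (INR (S m)) x).
Proof.
  unfold q, psi. assert (0 < 1 + x ^ 2) by nra.
  auto_derive; [lra|].
  change (match m with | 0%nat => 1 | S _ => INR m + 1 end) with (INR (S m)).
  unfold Rdiv. replace (x * (x * 1)) with (x ^ 2) by ring.
  set (Y := ((1 + x) * / (1 + x ^ 2)) ^ m). field. lra.
Qed.

Lemma q_threshold (n : nat) : (2 <= n)%nat ->
  exists z, 0 < z < 1 /\ q n z = 2 /\
    (forall w, 0 < w < 1 -> (q n w <= 2 <-> w <= z)) /\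
    (forall w, 0 < w < 1 -> q n w = 2 -> w = z).
Proof.
  intros Hn. destruct n as [|m]; [lia|].
  assert (HN : 1 < INR (S m)) by (rewrite S_INR; assert (1 <= INR m) by (apply (le_INR 1); lia); lra).
  destruct (psi_sign _ HN) as [s0 [Hs0 Hsign]].
  set (df := fun x => ((1 + x) / (1 + x ^ 2)) ^ m * (1 + x) / (1 + x ^ 2) ^ 2 * psi (INR (S m)) x).
  assert (Hd : forall x, is_derive (q (S m)) x (df x)) by (intros; apply q_derive).
  assert (Hfactor : forall x, 0 < x -> 0 < ((1 + x) / (1 + x ^ 2)) ^ m * (1 + x) / (1 + x ^ 2) ^ 2).
  { intros x Hx. assert (0 < 1 + x ^ 2) by nra.
    apply Rdiv_lt_0_compat; [|apply pow_lt; lra].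
    apply Rmult_lt_0_compat; [|lra]. apply pow_lt, Rdiv_lt_0_compat; lra. }
  apply (unimodal_crossing _ 0 s0 1); [exact (continuity_of_derive _ _ Hd)|lra| | | |].
  - apply (strict_incr_of_derive _ df); auto.
    intros t Ht. apply Rmult_lt_0_compat; [apply Hfactor; lra|apply Hsign; lra].
  - intros x x' Hx Hxx' Hx'. cut (- q (S m) x < - q (S m) x'); [lra|].
    apply (strict_incr_of_derive (fun s => - q (S m) s) (fun s => - df s) s0 1); auto; try lra.
    + intros y. apply @is_derive_opp, Hd.
    + intros t Ht. assert (0 < ((1 + t) / (1 + t ^ 2)) ^ m * (1 + t) / (1 + t ^ 2) ^ 2)
        by (apply Hfactor; lra).
      assert (psi (INR (S m)) t < 0) by (apply Hsign; lra). unfold df. nra.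
  - unfold q. replace ((1 + 0) / (1 + 0 ^ 2)) with 1 by field. rewrite pow1. lra.
  - unfold q. replace ((1 + 1) / (1 + 1 ^ 2)) with 1 by field. rewrite pow1. ring.
Qed.

(* For Λ = 2, inequality (d) holds for every ρ: it is (1 - ρ)^2 ≥ 0. *)
Lemma q1_le (s : R) : q 1 s <= 2.
Proof.
  unfold q. assert (Hd : 0 < 1 + s ^ 2) by nra.
  apply (Rmult_le_reg_r (1 + s ^ 2)); [lra|].
  replace ((1 + s) * ((1 + s) / (1 + s ^ 2)) ^ 1 * (1 + s ^ 2)) with ((1 + s) ^ 2)
    by (field; lra).
  pose proof (pow2_ge_0 (1 - s)). nra.
Qed.

Theorem lemma5p6 (rho : R) (L : nat) (Hrho : 0 < rho < 1) (HL : (2 <= L)%nat) :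
  ((3 <= L)%nat -> exists! s : R, 0 < s < 1 /\ star_eq L s) /\
  (cond_a rho L <-> bounds_rk rho (Xb rho) L) /\
  (cond_a rho L <-> bounds_rk rho (Xc rho L) L) /\
  (cond_a rho L <-> (1 + rho) ^ L <= 2 * (1 + rho ^ 2) ^ (L - 1)) /\
  (cond_a rho L <-> exists s : R, is_rho_star L s /\ rho <= s).
Proof.
  destruct L as [|n]; [lia|]. assert (Hn : (1 <= n)%nat) by lia.
  replace (S n - 1)%nat with n by lia.
  rewrite (cond_a_iff rho Hrho n Hn), (bounds_rk_iff rho Hrho (Xb rho) n Hn),
    (bounds_rk_iff rho Hrho (Xc rho (S n)) n Hn), (Xb_le_Xc_iff rho Hrho n Hn),
    (Xc_pow rho Hrho n Hn), (Xb_pow_iff rho Hrho n).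
  pose proof (Rle_refl (Xmax rho)) as Hmax. pose proof (Rle_refl (Xb rho)) as Hmin.
  split; [|split; [tauto|split; [tauto|split; [tauto|]]]].
  - intros H3. destruct (q_threshold n ltac:(lia)) as (z & Hz & Hqz & _ & Huniq).
    exists z. split; [split; [lra|apply q_eq_iff, Hqz]|].
    intros w [Hw Hst]. symmetry. apply Huniq; [lra|apply q_eq_iff, Hst].
  - rewrite q_le_iff. unfold is_rho_star. destruct (Nat.eq_dec n 1) as [->|Hn1].
    + split; intros _; [exists 1; split; [left; auto|lra]|apply q1_le].
    + destruct (q_threshold n ltac:(lia)) as (z & Hz & Hqz & Hbelow & Huniq).
      rewrite (Hbelow rho Hrho). split.
      * intros H. exists z. split; [right; split; [lia|split; [lra|apply q_eq_iff, Hqz]]|lra].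
      * intros (s & [[Hs2 _]|(_ & Hs & Hst)] & Hle); [lia|].
        rewrite (Huniq s Hs (proj1 (q_eq_iff n s) Hst)) in Hle. exact Hle.
Qed.
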